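(* Let $f$ be a 3-CNF formula with clauses $C_1,\dots,C_m$ over variables $x_1,\dots,x_n$, each clause being a disjunction of three literal occurrences. Let $G$ be the graph constructed as follows: for each clause $C_i=x\vee y\vee z$ introduce four vertices $x^i,y^i,z^i,c^i$ forming a clique $G_i$, where $x^i,y^i,z^i$ are associated with the literals $x,y,z$ of $C_i$ (so $G$ has $4m$ vertices); additionally, for any two vertices $u,v$ in different cliques $G_i\ne G_j$ such that the literal associated with $u$ is the negation of the literal associated with $v$, add the edge $uv$. Then $\alpha(G)=m$, $\mathrm{diss}(G)=\alpha(G)+\nu_s(G)$, and $$f\text{ is satisfiable}\iff \mathrm{diss}(G)=2\alpha(G)\iff \mathrm{diss}(G)=2\nu_s(G).$$
   Context: All graphs are finite, simple and undirected. A set $I$ of vertices of a graph $G$ is a dissociation set if the induced subgraph $G[I]$ has maximum degree at most $1$; $\mathrm{diss}(G)$ is the maximum order of a dissociation set in $G$. $\alpha(G)$ is the independence number. An induced matching is a matching $N$ such that the subgraph of $G$ induced by the vertices covered by $N$ has edge set exactly $N$; $\nu_s(G)$ is the maximum size of an induced matching in $G$. *)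

From mathcomp Require Import all_boot.
Set Implicit Arguments. Unset Strict Implicit. Unset Printing Implicit Defensive.

Section GraphParams.
Variables (T : finType) (e : rel T).

Definition independent (S : {set T}) : bool :=
  [forall x in S, forall y in S, ~~ e x y].

Definition dissociation (S : {set T}) : bool :=
  [forall x in S, #|[set y in S | e x y]| <= 1].

Definition induced_matching (N : {set {set T}}) : bool :=
  [forall E in N, exists u, exists v, (E == [set u; v]) && (u != v) && e u v]
  && trivIset N
  && [forall u in cover N, forall v in cover N, e u v ==> ([set u; v] \in N)].

Definition alpha : nat := \max_(S : {set T} | independent S) #|S|.
Definition diss : nat := \max_(S : {set T} | dissociation S) #|S|.
Definition nu_s : nat := \max_(N : {set {set T}} | induced_matching N) #|N|.

End GraphParams.

(* A literal over variables x_0..x_{n-1}: (variable, polarity); polarity true = positive. *)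
Definition literal (n : nat) := ('I_n * bool)%type.

Definition cnf3 (m n : nat) := 'I_m -> 'I_3 -> literal n.

Definition lit_true n (a : 'I_n -> bool) (l : literal n) : bool := a l.1 == l.2.

Definition satisfiable m n (f : cnf3 m n) : Prop :=
  exists a : 'I_n -> bool, forall i : 'I_m, exists k : 'I_3, lit_true a (f i k).

Definition lit_neg n (l1 l2 : literal n) : bool := (l1.1 == l2.1) && (l1.2 != l2.2).

(* Vertices of G: (i, k) with i a clause; k = 0,1,2 are x^i,y^i,z^i, and k = 3 is c^i. *)
Definition cnf_vertex (m : nat) := ('I_m * 'I_4)%type.

Definition vlit m n (f : cnf3 m n) (v : cnf_vertex m) : option (literal n) :=
  omap (f v.1) (insub (val v.2) : option 'I_3).

Definition opp_vertices m n (f : cnf3 m n) (u v : cnf_vertex m) : bool :=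
  match vlit f u, vlit f v with
  | Some l1, Some l2 => lit_neg l1 l2
  | _, _ => false
  end.

Definition cnf_graph m n (f : cnf3 m n) : rel (cnf_vertex m) :=
  fun u v => (u != v) && ((u.1 == v.1) || ((u.1 != v.1) && opp_vertices f u v)).

From mathcomp Require Import all_boot zify.
Set Implicit Arguments. Unset Strict Implicit. Unset Printing Implicit Defensive.

(* The cliques G_i cover G, so an independent set meets each of them at most once, while the
   vertices c^i form an independent set: alpha(G) = m. Each c^i is adjacent only inside its own
   clique. Hence, if beta is the largest size of an independent set avoiding the c^i, adding all
   the c^i to such a set gives a dissociation set, and joining each of its vertices to the c^i of
   its clique gives an induced matching; conversely every dissociation set and every induced
   matching yield independent sets avoiding the c^i that are large enough to show
   diss(G) = m + beta and nu_s(G) = beta. Finally, an independent set of m literal vertices picks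
   one literal in each clause with no two contradictory, i.e. a satisfying assignment, so f is
   satisfiable iff beta = m, and the three identities follow by arithmetic. *)


Section GraphFacts.
Variables (T : finType) (e : rel T).

Definition alpha_outside (A : {set T}) : nat :=
  \max_(S : {set T} | independent e S && [disjoint S & A]) #|S|.

Lemma independentP (S : {set T}) : reflect {in S &, forall x y, ~~ e x y} (independent e S).
Proof.
apply: (iffP forall_inP) => [H x y xS yS | H x xS]; first exact: forall_inP (H x xS) y yS.
by apply/forall_inP => y; apply: H.
Qed.

Lemma dissociation_nbr (D : {set T}) x y z : dissociation e D ->
  x \in D -> y \in D -> z \in D -> e x y -> e x z -> y = z.
Proof.
move=> /forall_inP dD xD yD zD exy exz.
by apply: (card_le1_eqP (dD x xD)); rewrite inE ?yD ?zD ?exy ?exz.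
Qed.

Lemma leq_alpha_outside (A S : {set T}) :
  independent e S -> [disjoint S & A] -> #|S| <= alpha_outside A.
Proof. by move=> iS dSA; apply: leq_bigmax_cond; rewrite iS dSA. Qed.

Lemma alpha_outside_witness (A : {set T}) :
  exists S : {set T}, [/\ independent e S, [disjoint S & A] & #|S| = alpha_outside A].
Proof.
have nonempty : 0 < #|[pred S : {set T} | independent e S && [disjoint S & A]]|.
  apply/card_gt0P; exists set0; rewrite inE /= -setI_eq0 set0I eqxx andbT.
  by apply/independentP => x y; rewrite inE.
have [S /andP[iS dSA] maxS] := eq_bigmax_cond (fun S : {set T} => #|S|) nonempty.
by exists S; split; rewrite // /alpha_outside maxS.
Qed.

(* Pick a vertex of [A] in each edge of [N]: two adjacent picked vertices would themselves form
   an edge of [N], meeting two distinct edges of [N]. *)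
Lemma induced_matching_transversal (N : {set {set T}}) (A : {set T}) :
  irreflexive e -> induced_matching e N -> {in N, forall E, E :&: A != set0} ->
  exists S : {set T}, [/\ S \subset A, independent e S & #|S| = #|N|].
Proof.
move=> e_irr /andP[/andP[_ triN] closedN] meetA.
pose g E := [pick x in E :&: A].
have g_some E : E \in N -> exists x, g E = Some x.
  move=> EN; rewrite /g; case: pickP => [x _ | none]; first by exists x.
  by have /set0Pn[x] := meetA E EN; rewrite none.
have g_mem E x : g E = Some x -> x \in E :&: A by rewrite /g; case: pickP => // y yEA [<-].
have blockE E x : E \in N -> x \in E -> E = pblock N x.
  by move=> EN xE; rewrite (def_pblock triN EN xE).
have g_inj : {in N &, injective g}.
  move=> E1 E2 E1N E2N gE12; have [x gx] := g_some E1 E1N.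
  have /setIP[xE1 _] := g_mem _ _ gx; have /setIP[xE2 _] := g_mem E2 x (etrans (esym gE12) gx).
  by rewrite (blockE E1 x) // (blockE E2 x).
pose S := [set x | [exists E in N, g E == Some x]].
have SP x : reflect (exists2 E, E \in N & g E = Some x) (x \in S).
  by rewrite inE; apply: (iffP exists_inP) => [] [E EN /eqP]; exists E.
exists S; split.
- by apply/subsetP => x /SP[E _ /g_mem /setIP[]].
- apply/independentP => x y /SP[E1 E1N gx] /SP[E2 E2N gy]; apply/negP => exy.
  have /setIP[xE1 _] := g_mem _ _ gx; have /setIP[yE2 _] := g_mem _ _ gy.
  have inC z E : E \in N -> z \in E -> z \in cover N by move=> EN zE; apply/bigcupP; exists E.
  have xyN := implyP (forall_inP (forall_inP closedN x (inC x E1 E1N xE1))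
                                 y (inC y E2 E2N yE2)) exy.
  have E1xy : E1 = [set x; y] by rewrite (blockE E1 x) // (blockE _ x xyN) ?setU11.
  have E2xy : E2 = [set x; y] by rewrite (blockE E2 y) // (blockE _ y xyN) ?setU1r ?set11.
  by move: gy; rewrite E2xy -E1xy gx => -[xy]; move: exy; rewrite xy e_irr.
- rewrite -(card_in_imset g_inj) -(card_imset S (@Some_inj _)).
  apply: eq_card => o; apply/imsetP/imsetP => [[x /SP[E EN gEx] ->] | [E EN ->]].
  + by exists E.
  + by have [x gEx] := g_some E EN; exists x; rewrite //; apply/SP; exists E.
Qed.

End GraphFacts.

Section CliqueCover.
Variables (T I : finType) (e : rel T) (p : T -> I) (c : I -> T).
Hypotheses (e_sym : symmetric e) (e_irr : irreflexive e).
Hypothesis clique_cover : forall u v, p u = p v -> u != v -> e u v.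
Hypothesis p_c : cancel c p.
Hypothesis c_nbr : forall i v, e (c i) v -> p v = i.

Local Notation C := [set c i | i : I].

Lemma mem_C v : (v \in C) = (v == c (p v)).
Proof. by apply/imsetP/eqP => [[i _ ->] | ->]; [rewrite p_c | exists (p v)]. Qed.

Lemma nbr_C x y : y \in C -> e x y -> y = c (p x).
Proof. by move=> /imsetP[j _ ->]; rewrite e_sym => /c_nbr ->. Qed.

Lemma independent_inj (S : {set T}) : independent e S -> {in S &, injective p}.
Proof.
move=> /independentP iS u v uS vS puv; apply/eqP; apply: contraT => uv.
by have := iS u v uS vS; rewrite clique_cover.
Qed.

Lemma independent_card_le (S : {set T}) : independent e S -> #|S| <= #|I|.
Proof. by move=> iS; rewrite -(card_in_imset (independent_inj iS)) max_card. Qed.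

Lemma independent_C : independent e C.
Proof.
apply/independentP => _ _ /imsetP[i _ ->] /imsetP[j _ ->]; apply/negP => eij.
by move: (eij); rewrite -(c_nbr eij) p_c e_irr.
Qed.

Lemma card_C : #|C| = #|I|.
Proof. exact/card_imset/(can_inj p_c). Qed.

Lemma alpha_clique_cover : alpha e = #|I|.
Proof.
apply/eqP; rewrite eqn_leq; apply/andP; split.
- by apply/bigmax_leqP => S; apply: independent_card_le.
- by rewrite -{1}card_C; apply: leq_bigmax_cond independent_C.
Qed.

Lemma alpha_outside_eq_card (A : {set T}) : alpha_outside e A = #|I| <->
  exists S : {set T}, [/\ independent e S, [disjoint S & A] & #|S| = #|I|].
Proof.
split=> [<- | [S [iS dSA cardS]]]; first exact: alpha_outside_witness.
apply/eqP; rewrite eqn_leq -{2}cardS leq_alpha_outside // andbT.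
by apply/bigmax_leqP => S' /andP[iS' _]; apply: independent_card_le.
Qed.

Lemma dissociation_setUC (S : {set T}) : independent e S -> dissociation e (S :|: C).
Proof.
move=> iS; have /independentP iC := independent_C; have /independentP iS' := iS.
apply/forall_inP => x xSC; apply/card_le1_eqP => y z /setIdP[ySC exy] /setIdP[zSC exz].
have [xC | xNC] := boolP (x \in C).
- have nbr w : w \in S :|: C -> e x w -> w \in S /\ p w = p x.
    move=> /setUP[wS | wC] exw; last by have := iC x w xC wC; rewrite exw.
    have xc : x = c (p x) by apply/eqP; rewrite -mem_C.
    by split=> //; apply: c_nbr; rewrite -xc.
  have [yS py] := nbr y ySC exy; have [zS pz] := nbr z zSC exz.
  by apply: (independent_inj iS) => //; rewrite py pz.
- have xS : x \in S by move: xSC; rewrite inE (negbTE xNC) orbF.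
  have nbr w : w \in S :|: C -> e x w -> w = c (p x).
    move=> /setUP[wS | wC] exw; last exact: nbr_C.
    by have := iS' x w xS wS; rewrite exw.
  by rewrite (nbr y ySC exy) (nbr z zSC exz).
Qed.

Lemma card_setUC (S : {set T}) : [disjoint S & C] -> #|S :|: C| = #|S| + #|I|.
Proof. by move=> dSC; rewrite cardsU (disjoint_setI0 dSC) cards0 subn0 card_C. Qed.

Lemma induced_matching_pairs (S : {set T}) : independent e S -> [disjoint S & C] ->
  induced_matching e [set [set v; c (p v)] | v in S].
Proof.
move=> iS dSC; have /independentP iS' := iS; have /independentP iC := independent_C.
have cC i : c i \in C by rewrite mem_C p_c.
have pair_in v : v \in S -> [set v; c (p v)] \in [set [set v; c (p v)] | v in S].
  exact: (imset_f (fun v => [set v; c (p v)])).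
have vNC v : v \in S -> v != c (p v).
  by move=> vS; rewrite -mem_C (disjointFr dSC vS).
have pairP v x : x \in [set v; c (p v)] -> p x = p v.
  by rewrite !inE => /orP[] /eqP ->; rewrite ?p_c.
apply/andP; split; first (apply/andP; split).
- apply/forall_inP => _ /imsetP[v vS ->]; apply/existsP; exists v; apply/existsP; exists (c (p v)).
  by rewrite eqxx vNC // clique_cover ?p_c // vNC.
- apply/trivIsetP => _ _ /imsetP[v vS ->] /imsetP[w wS ->] vw.
  rewrite -setI_eq0; apply: contraT => /set0Pn[x /setIP[xv xw]].
  have pvw : p v = p w by rewrite -(pairP v x xv) -(pairP w x xw).
  by move: vw; rewrite (independent_inj iS vS wS pvw) eqxx.
- apply/forall_inP => u /bigcupP[_ /imsetP[a aS ->] ua].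
  apply/forall_inP => w /bigcupP[_ /imsetP[b bS ->] wb]; apply/implyP => euw.
  move: ua wb; rewrite !inE => /orP[] /eqP ua /orP[] /eqP wb; subst u w.
  + by move: euw; rewrite (negbTE (iS' a b aS bS)).
  + by rewrite (nbr_C (cC _) euw); apply: pair_in.
  + by rewrite -(c_nbr euw) setUC; apply: pair_in.
  + by move: euw; rewrite (negbTE (iC _ _ (cC _) (cC _))).
Qed.

Lemma card_pairs (S : {set T}) : [disjoint S & C] ->
  #|[set [set v; c (p v)] | v in S]| = #|S|.
Proof.
move=> dSC; apply: card_in_imset => v w vS _ vw.
have : v \in [set w; c (p w)] by rewrite -vw setU11.
rewrite !inE => /orP[/eqP // | /eqP vC].
by move: (disjointFr dSC vS); rewrite vC imset_f.
Qed.

Lemma induced_matching_outside_C (N : {set {set T}}) : induced_matching e N ->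
  exists S : {set T}, [/\ independent e S, [disjoint S & C] & #|S| = #|N|].
Proof.
move=> imN; have [|S [SNC iS cardS]] := induced_matching_transversal e_irr imN (A := ~: C).
  move=> E EN; have /existsP[u /existsP[v /andP[/andP[/eqP -> uv] euv]]] :=
    forall_inP (andP (andP imN).1).1 E EN.
  apply/set0Pn; have [uC | uNC] := boolP (u \in C); last by exists u; rewrite !inE eqxx.
  have u_eq : u = c (p u) by apply/eqP; rewrite -mem_C.
  have pv : p v = p u by apply: c_nbr; rewrite -u_eq.
  by exists v; rewrite in_setI in_setC mem_C pv -u_eq !inE eqxx orbT eq_sym.
by exists S; rewrite disjoints_subset.
Qed.

Lemma nu_s_clique_cover : nu_s e = alpha_outside e C.
Proof.
apply/eqP; rewrite eqn_leq; apply/andP; split.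
- apply/bigmax_leqP => N /induced_matching_outside_C[S [iS dSC <-]].
  exact: leq_alpha_outside.
- have [S [iS dSC <-]] := alpha_outside_witness e C.
  by rewrite -card_pairs //; apply: leq_bigmax_cond (induced_matching_pairs iS dSC).
Qed.

Variable r : T -> nat.
Hypothesis r_inj : forall u v, p u = p v -> r u = r v -> u = v.
Hypothesis r_c : forall v, r v <= r (c (p v)).

(* Keep, in each clique met twice by [D], its lower-ranked vertex: these vertices are
   pairwise non-adjacent, and what remains of [D] meets every clique at most once. *)
Lemma dissociation_split (D : {set T}) : dissociation e D ->
  exists S : {set T}, [/\ independent e S, [disjoint S & C] & #|D| <= #|I| + #|S|].
Proof.
move=> dD; pose S := [set v in D | [exists w in D, (p w == p v) && (r v < r w)]].
have SP v : v \in S -> v \in D /\ exists2 w, w \in D & p w = p v /\ r v < r w.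
  by rewrite inE => /andP[vD /exists_inP[w wD /andP[/eqP pw rvw]]]; split=> //; exists w.
have above v w : p w = p v -> r v < r w -> e v w.
  by move=> pw rvw; apply: clique_cover => //; apply: contraTneq rvw => ->; rewrite ltnn.
exists S; split.
- apply/independentP => v w /SP[vD [v' v'D [pv' rv']]] /SP[wD [w' w'D [pw' rw']]].
  apply/negP => evw.
  have wv' : w = v' := dissociation_nbr dD vD wD v'D evw (above v v' pv' rv').
  subst v'; have evw' : e v w' by apply: above; [rewrite pw' | apply: ltn_trans rw'].
  by move: rw'; rewrite -(dissociation_nbr dD vD wD w'D evw evw') ltnn.
- rewrite disjoints_subset; apply/subsetP => v /SP[_ [w _ [pw rvw]]].
  by rewrite inE mem_C; apply: contraTneq rvw => ->; rewrite -leqNgt -pw r_c.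
- have DS : D :&: S = S by apply/setIidPr/subsetP => v /SP[].
  rewrite -(cardsID S D) DS addnC leq_add2r.
  have p_inj : {in D :\: S &, injective p}.
    move=> u v /setDP[uD uNS] /setDP[vD vNS] puv.
    case: (ltngtP (r u) (r v)) => [ruv | rvu | /(r_inj puv) //].
    + by case/negP: uNS; rewrite inE uD; apply/exists_inP; exists v; rewrite // puv eqxx.
    + by case/negP: vNS; rewrite inE vD; apply/exists_inP; exists u; rewrite // puv eqxx.
  by rewrite -(card_in_imset p_inj) max_card.
Qed.

Lemma diss_clique_cover : diss e = #|I| + alpha_outside e C.
Proof.
apply/eqP; rewrite eqn_leq; apply/andP; split.
- apply/bigmax_leqP => D /dissociation_split[S [iS dSC leD]].
  by rewrite (leq_trans leD) // leq_add2l leq_alpha_outside.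
- have [S [iS dSC <-]] := alpha_outside_witness e C.
  by rewrite addnC -card_setUC //; apply: leq_bigmax_cond (dissociation_setUC iS).
Qed.

End CliqueCover.

Section CnfGraph.
Variables (m n : nat) (f : cnf3 m n).
Local Notation G := (cnf_graph f).

Definition clause_vertex (i : 'I_m) : cnf_vertex m := (i, ord_max).
Local Notation clause_vertices := [set clause_vertex i | i : 'I_m].

Lemma cnf_graph_sym : symmetric G.
Proof.
move=> u v; rewrite /cnf_graph /opp_vertices eq_sym (eq_sym u.1).
case: (vlit f u) => [l1|]; case: (vlit f v) => [l2|] //.
by rewrite /lit_neg [l1.1 == _]eq_sym [l1.2 == _]eq_sym.
Qed.

Lemma cnf_graph_irr : irreflexive G.
Proof. by move=> u; rewrite /cnf_graph eqxx. Qed.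

Lemma cnf_graph_same_clause (u v : cnf_vertex m) : u.1 = v.1 -> u != v -> G u v.
Proof. by move=> uv1 uv; rewrite /cnf_graph uv uv1 eqxx. Qed.

Lemma cnf_graph_clause_vertex i (v : cnf_vertex m) : G (clause_vertex i) v -> v.1 = i.
Proof.
by rewrite /cnf_graph /opp_vertices /vlit insubF //= andbF orbF => /andP[_ /eqP <-].
Qed.

Lemma cnf_vertex_eq (u v : cnf_vertex m) : u.1 = v.1 -> val u.2 = val v.2 -> u = v.
Proof. by case: u v => [u1 u2] [v1 v2] /= -> /val_inj ->. Qed.

Lemma cnf_vertex_rank_le (v : cnf_vertex m) : val v.2 <= val (clause_vertex v.1).2.
Proof. by rewrite -ltnS ltn_ord. Qed.

Lemma vlit_literal_vertex (v : cnf_vertex m) (lt_v3 : val v.2 < 3) :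
  vlit f v = Some (f v.1 (Ordinal lt_v3)).
Proof. by rewrite /vlit insubT. Qed.

Lemma notin_clause_vertices (v : cnf_vertex m) : (v \notin clause_vertices) = (val v.2 < 3).
Proof.
have -> : (v \in clause_vertices) = (val v.2 == 3).
  by apply/imsetP/eqP => [[i _ ->] // | v3]; exists v.1 => //; apply: cnf_vertex_eq.
by rewrite ltn_neqAle -ltnS ltn_ord andbT.
Qed.

Lemma cnf_graph_literals (u v : cnf_vertex m) lu lv : vlit f u = Some lu -> vlit f v = Some lv ->
  G u v = (u != v) && ((u.1 == v.1) || lit_neg lu lv).
Proof. by move=> hu hv; rewrite /cnf_graph /opp_vertices hu hv; case: (u.1 == v.1). Qed.

Lemma satisfiable_iff_transversal : satisfiable f <->
  exists S : {set cnf_vertex m}, [/\ independent G S, [disjoint S & clause_vertices] & #|S| = m].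
Proof.
split=> [[a sat_a] | [S [iS dSC cardS]]].
- pose k i := odflt ord0 [pick k | lit_true a (f i k)].
  have k_true i : lit_true a (f i (k i)).
    by rewrite /k; case: pickP => [// | none]; have [j] := sat_a i; rewrite none.
  pose lv i : cnf_vertex m := (i, widen_ord (leqnSn 3) (k i)).
  have vlit_lv i : vlit f (lv i) = Some (f i (k i)) by rewrite /vlit /= valK.
  exists [set lv i | i : 'I_m]; split.
  + apply/independentP => _ _ /imsetP[i _ ->] /imsetP[j _ ->].
    rewrite (cnf_graph_literals (vlit_lv i) (vlit_lv j)) /lit_neg /=.
    apply/negP => /andP[ij /orP[/eqP ij1 | /andP[/eqP same_var]]].
    * by move: ij; rewrite ij1 eqxx.
    * by move: (k_true i) (k_true j); rewrite /lit_true same_var => /eqP <- /eqP <-; rewrite eqxx.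
  + rewrite disjoints_subset; apply/subsetP => _ /imsetP[i _ ->].
    by rewrite inE notin_clause_vertices /=; apply: ltn_ord.
  + by rewrite card_imset ?card_ord // => i j [].
- have lit_S v : v \in S -> val v.2 < 3.
    by move=> vS; rewrite -notin_clause_vertices (disjointFr dSC vS).
  have S_inj := independent_inj cnf_graph_same_clause iS; have /independentP iS' := iS.
  have clauses : [set v.1 | v in S] = setT.
    by apply/eqP; rewrite eqEcard subsetT cardsT card_in_imset // cardS card_ord leqnn.
  exists (fun x => [exists v in S, vlit f v == Some (x, true)]) => i.
  have /imsetP[v vS ->] : i \in [set v.1 | v in S] by rewrite clauses inE.
  exists (Ordinal (lit_S v vS)); have := vlit_literal_vertex (lit_S v vS).
  case: (f v.1 _) => x [] vl; rewrite /lit_true /=.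
  + by rewrite eqb_id; apply/exists_inP; exists v; rewrite ?vl.
  + rewrite eqbF_neg; apply/exists_inP => -[w wS /eqP wl].
    have vw : v != w by apply/eqP => vw; move: wl; rewrite -vw vl.
    by have := iS' v w vS wS; rewrite (cnf_graph_literals vl wl) vw /lit_neg /= eqxx orbT.
Qed.

Lemma alpha_cnf_graph : alpha G = m.
Proof.
by rewrite (alpha_clique_cover cnf_graph_irr cnf_graph_same_clause (c := clause_vertex)
  _ (@cnf_graph_clause_vertex)) ?card_ord.
Qed.

Lemma diss_cnf_graph : diss G = m + alpha_outside G clause_vertices.
Proof.
by rewrite (diss_clique_cover cnf_graph_sym cnf_graph_irr cnf_graph_same_clause (c := clause_vertex)
  _ (@cnf_graph_clause_vertex) cnf_vertex_eq cnf_vertex_rank_le) ?card_ord.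
Qed.

Lemma nu_s_cnf_graph : nu_s G = alpha_outside G clause_vertices.
Proof.
by rewrite (nu_s_clique_cover cnf_graph_sym cnf_graph_irr cnf_graph_same_clause (c := clause_vertex)
  _ (@cnf_graph_clause_vertex)).
Qed.

Lemma satisfiable_iff_alpha_outside : satisfiable f <-> alpha_outside G clause_vertices = m.
Proof.
rewrite satisfiable_iff_transversal.
by have := alpha_outside_eq_card cnf_graph_same_clause clause_vertices; rewrite card_ord => ->.
Qed.

End CnfGraph.

Theorem mainTheorem8 (m n : nat) (f : cnf3 m n) :
  alpha (cnf_graph f) = m /\
  diss (cnf_graph f) = alpha (cnf_graph f) + nu_s (cnf_graph f) /\
  (satisfiable f <-> diss (cnf_graph f) = 2 * alpha (cnf_graph f)) /\
  (diss (cnf_graph f) = 2 * alpha (cnf_graph f) <->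
   diss (cnf_graph f) = 2 * nu_s (cnf_graph f)).
Proof.
by rewrite alpha_cnf_graph nu_s_cnf_graph diss_cnf_graph satisfiable_iff_alpha_outside; lia.
Qed.
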